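(* For $d>0$ let $\lambda_d(\rho)=\int_{\sinh^{-1}d}^{\rho}\frac{d}{\sqrt{\sinh^2x-d^2}}\,dx$ for $\rho\ge\sinh^{-1}d$, let $\hat\rho(d)=\frac{3}{2}\log d$, and let $\hat h(d)=\lambda_d(\hat\rho(d))$ (defined for $d$ large enough that $\hat\rho(d)\ge\sinh^{-1}d$). Then $\lim_{d\to\infty}\hat h(d)=\frac{\pi}{2}$.
   Context: The function $\lambda_d$ is the generating function of the rotationally symmetric minimal catenoid $\mathcal{C}_d=\{(\rho,\theta,\pm\lambda_d(\rho))\}$ in $\mathbb{H}^2\times\mathbb{R}$ (coordinates: geodesic polar coordinates $(\rho,\theta)$ on $\mathbb{H}^2$ and height $z$), so $2\hat h(d)$ is the height of the compact piece $\mathcal{C}_d\cap(\mathbb{H}^2\times[-\hat h(d),\hat h(d)])$. *)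

From HB Require Import structures.
From mathcomp Require Import all_boot all_order all_algebra.
From mathcomp Require Import all_classical all_reals all_analysis.
Set Implicit Arguments. Unset Strict Implicit. Unset Printing Implicit Defensive.
Import Order.TTheory GRing.Theory Num.Theory.
Import numFieldNormedType.Exports.
Local Open Scope classical_set_scope.
Local Open Scope ring_scope.

Definition sinh {R : realType} (x : R) : R := (expR x - expR (- x)) / 2.
Definition asinh {R : realType} (x : R) : R := ln (x + Num.sqrt (x ^+ 2 + 1)).

(* lambda_d(rho) = int_{asinh d}^{rho} d / sqrt(sinh^2 x - d^2) dx,
   as a (Lebesgue, hence absolutely convergent improper) integral of a
   nonnegative function, valued in the extended reals. *)
Definition lambda_ {R : realType} (d rho : R) : \bar R :=
  (\int[@lebesgue_measure R]_(x in `]asinh d, rho])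
     (d / Num.sqrt (sinh x ^+ 2 - d ^+ 2))%:E)%E.

Definition rho_hat {R : realType} (d : R) : R := 3 / 2 * ln d.

Definition h_hat {R : realType} (d : R) : \bar R := lambda_ d (rho_hat d).

From HB Require Import structures.
From mathcomp Require Import all_boot all_order all_algebra.
From mathcomp Require Import all_classical all_reals all_analysis.
From mathcomp Require Import ring lra measurable_realfun.
Import Order.TTheory GRing.Theory Num.Theory.
Import numFieldNormedType.Exports.
Local Open Scope classical_set_scope.
Local Open Scope ring_scope.

(* Put u = sinh x / d. The integrand d / sqrt (sinh^2 x - d^2) = 1 / sqrt (u^2 - 1)
   differs by the factor coth x from the derivative of G x = arcsec u, and
   1 <= coth x <= 1 + 1/d wherever sinh x > d. Hence lambda_d rho <= sup G = pi/2,
   and lambda_d rho is at least (G rho - G x) / (1 + 1/d) for asinh d < x < rho.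
   Take x = asinh (d + 1), i.e. u = 1 + 1/d, so G x -> arcsec 1 = 0, while
   sinh (rho_hat d) / d ~ sqrt d / 2 -> +oo gives G (rho_hat d) -> pi/2. *)

Lemma is_derive_continuous {R : realType} {f : R -> R} {x df : R} :
  is_derive x 1 f df -> {for x, continuous f}.
Proof. by case=> fx _; exact/differentiable_continuous/derivable1_diffP. Qed.

Section hyperbolic.
Context {R : realType}.
Implicit Types x y : R.

Definition cosh x : R := (expR x + expR (- x)) / 2.
Definition coth x : R := cosh x / sinh x.

Lemma is_derive_expRN x : is_derive x 1 (fun y => expR (- y)) (- expR (- x)).
Proof. by rewrite -[X in is_derive _ _ _ X]mulrN1; apply: is_derive1_comp. Qed.

Lemma is_derive_sinh x : is_derive x 1 (@sinh R) (cosh x).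
Proof.
have := is_deriveM (is_deriveB (is_derive_expR x) (is_derive_expRN x))
  (is_derive_cst (2^-1 : R) x 1).
rewrite scaler0 add0r => D; apply: (is_derive_eq D).
by rewrite /cosh /cst /GRing.scale /= opprK mulrC.
Qed.

Lemma is_derive_cosh x : is_derive x 1 cosh (sinh x).
Proof.
have := is_deriveM (is_deriveD (is_derive_expR x) (is_derive_expRN x))
  (is_derive_cst (2^-1 : R) x 1).
rewrite scaler0 add0r => D; apply: (is_derive_eq D).
by rewrite /sinh /cst /GRing.scale /= mulrC.
Qed.

Lemma sinh0 : sinh 0 = 0 :> R.
Proof. by rewrite /sinh oppr0 subrr mul0r. Qed.

Lemma ltr_sinh : {mono @sinh R : x y / x < y}.
Proof.
apply/leW_mono/le_mono => x y xy; rewrite /sinh ltr_pM2r // ltrB //.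
  by rewrite ltr_expR.
by rewrite ltr_expR ltrN2.
Qed.

Lemma sinh_asinh x : sinh (asinh x) = x.
Proof.
rewrite /sinh /asinh; set s := Num.sqrt (x ^+ 2 + 1).
have s2 : s ^+ 2 = x ^+ 2 + 1 by rewrite sqr_sqrtr // addr_ge0 // sqr_ge0.
have s0 : 0 <= s := sqrtr_ge0 _.
have xs : 0 < x + s by nra.
have -> : expR (- ln (x + s)) = s - x.
  rewrite expRN lnK ?posrE //; apply: (mulfI (lt0r_neq0 xs)).
  by rewrite divff ?lt0r_neq0 // [x + s]addrC mulrC -subr_sqr s2 addrAC subrr add0r.
by rewrite lnK ?posrE //; field.
Qed.

Lemma asinh_lt x y : (asinh x < y) = (x < sinh y).
Proof. by rewrite -ltr_sinh sinh_asinh. Qed.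

Lemma cothE x : sinh x != 0 -> coth x = 1 + expR (- x) / sinh x.
Proof.
move=> s0; rewrite /coth [cosh x](_ : _ = sinh x + expR (- x)) ?mulrDl ?divff //.
by rewrite /cosh /sinh; field.
Qed.

Lemma coth_ge1 x : 0 < x -> 1 <= coth x.
Proof.
move=> x0; have s0 : 0 < sinh x by rewrite -sinh0 ltr_sinh.
by rewrite cothE ?lt0r_neq0 // lerDl divr_ge0 // ltW.
Qed.

Lemma coth_le x : 0 < x -> coth x <= 1 + (sinh x)^-1.
Proof.
move=> x0; have s0 : 0 < sinh x by rewrite -sinh0 ltr_sinh.
rewrite cothE ?lt0r_neq0 // lerD2l ler_pdivrMr // mulVf ?lt0r_neq0 //.
by rewrite expR_le1 oppr_le0 ltW.
Qed.

Lemma continuous_coth x : sinh x != 0 -> {for x, continuous coth}.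
Proof.
move=> s0; have cV := continuousV s0 (is_derive_continuous (is_derive_sinh x)).
exact: (continuousM (is_derive_continuous (is_derive_cosh x)) cV).
Qed.

End hyperbolic.

Lemma is_derive_atan {R : realType} (x : R) : is_derive x 1 atan (1 + x ^+ 2)^-1.
Proof. by rewrite -derive1_atan derive1E; exact/derivableP/derivable_atan. Qed.

Section arcsec.
Context {R : realType}.
Implicit Types u : R.

(* For [|u| <= 1] the square root below is junk [0], so [arcsec u = 0] there. *)
Definition arcsec u : R := atan (Num.sqrt (u ^+ 2 - 1)).

Lemma arcsec_ge0 u : 0 <= arcsec u.
Proof. by rewrite /arcsec -atan0 le_atan // sqrtr_ge0. Qed.

Lemma arcsec_ltpi2 u : arcsec u < pi / 2.
Proof. exact: atan_ltpi2. Qed.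

Lemma arcsec1 : arcsec 1 = 0.
Proof. by rewrite /arcsec expr1n subrr sqrtr0 atan0. Qed.

Lemma is_derive_sqrBn1 u : is_derive u 1 (fun v => v ^+ 2 - 1) (2 * u).
Proof.
have := is_deriveB (is_deriveX 2 (is_derive_id u 1)) (is_derive_cst (1 : R) u 1).
move=> D; apply: (is_derive_eq D).
by rewrite subr0 /GRing.scale /= mulr1 expr1.
Qed.

Lemma continuous_arcsec : continuous arcsec.
Proof.
move=> u; have := is_derive_continuous (is_derive_sqrBn1 u).
move=> /continuous_comp/(_ (@sqrt_continuous R _)) c.
exact: continuous_comp c (@continuous_atan R _).
Qed.

Lemma is_derive_arcsec u : 1 < u ->
  is_derive u 1 arcsec (u * Num.sqrt (u ^+ 2 - 1))^-1.
Proof.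
move=> u1; have w0 : 0 < u ^+ 2 - 1 by rewrite subr_gt0 exprn_egt1.
have Dsqrt := @is_derive1_comp _ _ (fun v => v ^+ 2 - 1) _ _ _
  (is_derive1_sqrt w0) (is_derive_sqrBn1 u).
apply: (is_derive_eq (is_derive1_comp (is_derive_atan _) Dsqrt)).
rewrite sqr_sqrtr ?ltW // addrCA subrr addr0.
have u0 : u != 0 by rewrite gt_eqF // (lt_trans ltr01).
by field; rewrite sqrtr_eq0 -ltNge w0.
Qed.

Lemma cvgy_arcsec : arcsec u @[u --> +oo] --> pi / 2.
Proof.
suff sqrt_cvgy : Num.sqrt ((u : R) ^+ 2 - 1) @[u --> +oo] --> +oo.
  exact: (cvg_comp _ _ sqrt_cvgy (@cvgy_atan R)).
apply/cvgryPge => A; near=> u.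
have u1 : 1 <= u by near: u; apply: nbhs_pinfty_ge.
have uA : A + 1 <= u by near: u; apply: nbhs_pinfty_ge; exact: num_real.
have sqrt_ge : u - 1 <= Num.sqrt (u ^+ 2 - 1).
  rewrite -[u - 1]ger0_norm ?subr_ge0 // -sqrtr_sqr ler_sqrt; nra.
by rewrite (le_trans _ sqrt_ge) // lerBrDr.
Unshelve. all: by end_near. Qed.

End arcsec.

Section lambda_bounds.
Context {R : realType}.
Variable d : R.
Hypothesis d_gt0 : 0 < d.
Local Notation mu := (@lebesgue_measure R).

Let f x := d / Num.sqrt (sinh x ^+ 2 - d ^+ 2).
Let G x := arcsec (sinh x / d).

Lemma lambda_integrand_ge0 x : 0 <= f x.
Proof. by rewrite divr_ge0 ?sqrtr_ge0 ?ltW. Qed.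

Lemma lambda_integrandE x : f x = (Num.sqrt ((sinh x / d) ^+ 2 - 1))^-1.
Proof.
rewrite /f; have -> : sinh x ^+ 2 - d ^+ 2 = d ^+ 2 * ((sinh x / d) ^+ 2 - 1).
  by field; rewrite gt_eqF.
by rewrite sqrtrM ?sqr_ge0 // sqrtr_sqr gtr0_norm // invfM mulrA divff ?gt_eqF ?mul1r.
Qed.

Lemma continuous_lambda_integrand x : d < sinh x -> {for x, continuous f}.
Proof.
move=> dx; have w0 : 0 < sinh x ^+ 2 - d ^+ 2 by rewrite subr_gt0 ltrXn2r ?ltW.
have := is_deriveB (is_deriveX 2 (is_derive_sinh x)) (is_derive_cst (d ^+ 2) x 1).
move=> /is_derive_continuous/continuous_comp/(_ (@sqrt_continuous R _)) cs.
have s0 : Num.sqrt (sinh x ^+ 2 - d ^+ 2) != 0 by rewrite gt_eqF ?sqrtr_gt0.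
have := continuousV (s := fun y => Num.sqrt (sinh y ^+ 2 - d ^+ 2)) s0 cs.
exact: continuousM (@cst_continuous _ _ d x).
Qed.

Lemma is_derive_arcsec_sinh x : d < sinh x -> is_derive x 1 G (f x * coth x).
Proof.
move=> dx; have s0 : 0 < sinh x := lt_trans d_gt0 dx.
have u1 : 1 < sinh x / d by rewrite ltr_pdivlMr ?mul1r.
have := is_deriveM (is_derive_sinh x) (is_derive_cst d^-1 x 1).
rewrite scaler0 add0r => Du.
have D := @is_derive1_comp _ arcsec (sinh * cst d^-1) _ _ _ (is_derive_arcsec _ u1) Du.
apply: (is_derive_eq D).
have w0 : Num.sqrt ((sinh x / d) ^+ 2 - 1) != 0.
  by rewrite gt_eqF // sqrtr_gt0 subr_gt0 exprn_egt1.
rewrite lambda_integrandE /coth /cst /GRing.scale /=.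
by field; rewrite w0 !gt_eqF.
Qed.

Let pos_of_sinh_gt t : d < sinh t -> 0 < t.
Proof. by move=> dt; rewrite -ltr_sinh sinh0 (lt_trans d_gt0). Qed.

Lemma continuous_lambda_integrand_coth t : d < sinh t ->
  {for t, continuous (fun t => f t * coth t)}.
Proof.
move=> dt; have s0 : sinh t != 0 by rewrite gt_eqF // (lt_trans d_gt0).
exact: continuousM (continuous_lambda_integrand _ dt) (continuous_coth _ s0).
Qed.

Lemma lambda_integrand_le_coth t : d < sinh t -> f t <= f t * coth t.
Proof.
by move=> /pos_of_sinh_gt t0; rewrite ler_peMr ?lambda_integrand_ge0 ?coth_ge1.
Qed.

Lemma lambda_integrand_coth_le t : d < sinh t -> f t * coth t <= (1 + d^-1) * f t.
Proof.
move=> dt; rewrite mulrC ler_wpM2r ?lambda_integrand_ge0 //.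
apply: le_trans (coth_le _ (pos_of_sinh_gt _ dt)) _.
by rewrite lerD2l lef_pV2 ?posrE ?ltW // (lt_trans d_gt0).
Qed.

Let measurable_on_domain {D : set R} (Dd : D `<=` `]asinh d, +oo[) (g : R -> R) :
  (forall t, d < sinh t -> {for t, continuous g}) -> measurable_fun D (EFin \o g).
Proof.
move=> cg; apply: (measurable_funS (measurable_itv _) Dd).
apply/measurable_EFinP; apply: open_continuous_measurable_fun.
  exact: interval_open.
by move=> t; rewrite inE /= in_itv /= andbT asinh_lt => /cg.
Qed.

Let subset_domain x y : asinh d < x -> `[x, y] `<=` `]asinh d, +oo[.
Proof.
by move=> dx t; rewrite /= !in_itv /= andbT => /andP[/(lt_le_trans dx)].
Qed.

Lemma integral_lambda_integrand_coth x y : asinh d < x -> x < y ->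
  (\int[mu]_(t in `[x, y]) (f t * coth t)%:E = (G y - G x)%:E)%E.
Proof.
move=> dx xy; have dt t : x <= t -> d < sinh t.
  by rewrite -asinh_lt; apply: lt_le_trans.
rewrite EFinB; apply: continuous_FTC2 => //.
- apply: continuous_in_subspaceT => t; rewrite inE /= in_itv /= => /andP[xt _].
  exact: continuous_lambda_integrand_coth (dt _ xt).
- split.
  + by move=> t; rewrite in_itv /= => /andP[/ltW/dt/is_derive_arcsec_sinh[]].
  + exact/cvg_at_right_filter/is_derive_continuous/is_derive_arcsec_sinh/dt.
  + exact/cvg_at_left_filter/is_derive_continuous/is_derive_arcsec_sinh/dt/ltW.
- move=> t; rewrite in_itv /= => /andP[/ltW/dt/is_derive_arcsec_sinh Dt _].
  by rewrite derive1E derive_val.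
Qed.

Lemma integral_lambda_integrand_le_pi2 x y : asinh d < x ->
  (\int[mu]_(t in `[x, y]) (f t)%:E <= (pi / 2)%:E)%E.
Proof.
move=> dx; have [xy|yx] := ltP x y; last first.
  rewrite (integral_Sset1 x) ?lee_fin ?divr_ge0 ?pi_ge0 // => t /=.
  by rewrite in_itv /= => /andP[xt ty]; apply/eqP; rewrite eq_le xt (le_trans ty).
have dt t : [set` `[x, y]] t -> d < sinh t.
  by move=> /(subset_domain _ y dx); rewrite /= in_itv /= andbT asinh_lt.
have mf := measurable_on_domain (subset_domain _ y dx).
apply: (@le_trans _ _ (\int[mu]_(t in `[x, y]) (f t * coth t)%:E)%E).
  apply: ge0_le_integral => //.
  - by move=> t _; rewrite lee_fin lambda_integrand_ge0.
  - exact: mf continuous_lambda_integrand.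
  - exact: mf continuous_lambda_integrand_coth.
  - by move=> t /dt ?; rewrite lee_fin lambda_integrand_le_coth.
rewrite integral_lambda_integrand_coth // lee_fin.
by rewrite lerBlDr (le_trans (ltW (arcsec_ltpi2 _))) ?lerDl ?arcsec_ge0.
Qed.

Lemma lambda_ge x rho : asinh d < x -> x < rho ->
  (((G rho - G x) / (1 + d^-1))%:E <= lambda_ d rho)%E.
Proof.
move=> dx xr; have k0 : 0 < 1 + d^-1 by rewrite addr_gt0 ?invr_gt0.
have dt t : [set` `[x, rho]] t -> d < sinh t.
  by move=> /(subset_domain _ rho dx); rewrite /= in_itv /= andbT asinh_lt.
have mf := measurable_on_domain (subset_domain _ rho dx).
apply: (@le_trans _ _ (\int[mu]_(t in `[x, rho]) (f t)%:E)%E); last first.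
  apply: ge0_subset_integral => //.
  - apply: measurable_on_domain continuous_lambda_integrand.
    by move=> t; rewrite /= !in_itv /= andbT => /andP[].
  - by move=> t _; rewrite lee_fin lambda_integrand_ge0.
  - by move=> t; rewrite /= !in_itv /= => /andP[/(lt_le_trans dx) -> ->].
have fc0 t : [set` `[x, rho]] t -> 0 <= f t * coth t.
  by move=> /dt /lambda_integrand_le_coth; apply: le_trans; exact: lambda_integrand_ge0.
have mfc := mf _ continuous_lambda_integrand_coth.
rewrite mulrC EFinM -integral_lambda_integrand_coth //.
rewrite -ge0_integralZl_EFin //; last first.
  by rewrite invr_ge0 ltW.
apply: ge0_le_integral => //.
- by move=> t /fc0 ?; rewrite -EFinM lee_fin mulr_ge0 // invr_ge0 ltW.
- exact: measurable_funeM.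
- exact: mf continuous_lambda_integrand.
- by move=> t /dt ?; rewrite -EFinM lee_fin ler_pdivrMl // lambda_integrand_coth_le.
Qed.

Lemma lambda_le_pi2 rho : (lambda_ d rho <= (pi / 2)%:E)%E.
Proof.
pose F n := [set` `[asinh d + n.+1%:R^-1, rho]].
have dF n : asinh d < asinh d + n.+1%:R^-1 by rewrite ltrDl invr_gt0.
have nd_F : nondecreasing_seq F.
  move=> m n mn; rewrite subsetEset => t; rewrite /F /= !in_itv /= => /andP[+ ->].
  by rewrite andbT; apply: le_trans; rewrite lerD2l lef_pV2 ?posrE ?ler_nat.
rewrite /lambda_ (itv_open_bnd_bigcup false rho (asinh d)).
have mF n : measurable (F n) by exact: measurable_itv.
have mf n : measurable_fun (F n) (EFin \o f).
  exact: measurable_on_domain (subset_domain _ _ (dF n)) _ continuous_lambda_integrand.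
have f0 n t : F n t -> (0 <= (f t)%:E)%E by rewrite lee_fin lambda_integrand_ge0.
apply: cvge_le (ge0_nondecreasing_set_cvg_integral (mu := mu) nd_F mF mf f0).
by apply: nearW => n; exact: integral_lambda_integrand_le_pi2.
Qed.

End lambda_bounds.

Section limits.
Context {R : realType}.

Lemma cvgy_invr : (x : R)^-1 @[x --> +oo] --> 0.
Proof.
have x_gt0 : \forall x \near +oo, 0 < (x : R) by apply: nbhs_pinfty_gt.
exact/(gtr0_cvgV0 (f := id) x_gt0)/cvg_id.
Qed.

Lemma sinh_rho_hat (d : R) : 0 < d ->
  sinh (rho_hat d) = (d * Num.sqrt d - (d * Num.sqrt d)^-1) / 2.
Proof.
move=> d0; have e : expR (ln d / 2) = Num.sqrt d.
  by rewrite -[LHS]ger0_norm ?expR_ge0 // -sqrtr_sqr expr2 -expRD -splitr lnK.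
rewrite /sinh /rho_hat expRN (_ : 3 / 2 * ln d = ln d + ln d / 2); last by field.
by rewrite expRD lnK ?e.
Qed.

Lemma sinh_rho_hat_div_cvgy : sinh (rho_hat d) / (d : R) @[d --> +oo] --> +oo.
Proof.
apply/cvgryPge => A; near=> d.
have d1 : 1 <= d by near: d; apply: nbhs_pinfty_ge.
have dA : (2 * A + 1) ^+ 2 <= d by near: d; apply: nbhs_pinfty_ge; exact: num_real.
have d0 : 0 < d := lt_le_trans ltr01 d1.
have s0 : 0 <= Num.sqrt d := sqrtr_ge0 d.
have s2 : Num.sqrt d ^+ 2 = d := sqr_sqrtr (ltW d0).
have sA : 2 * A + 1 <= Num.sqrt d by nra.
have q1 : (d * Num.sqrt d)^-1 <= 1 by rewrite invf_le1 ?mulr_gt0 ?sqrtr_gt0 //; nra.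
rewrite sinh_rho_hat // ler_pdivlMr //; nra.
Unshelve. all: by end_near. Qed.

Lemma arcsec_sinh_rho_hat : arcsec (sinh (rho_hat d) / (d : R)) @[d --> +oo] --> pi / 2.
Proof. exact: (cvg_comp _ _ sinh_rho_hat_div_cvgy cvgy_arcsec). Qed.

End limits.

Theorem lemma7p2 (R : realType) :
  h_hat d @[d --> +oo%R] --> ((pi : R) / 2)%:E.
Proof.
pose L (d : R) := (arcsec (sinh (rho_hat d) / d) - arcsec (1 + d^-1)) / (1 + d^-1).
have L_cvg : L d @[d --> +oo] --> pi / 2.
  have k1 : 1 + d^-1 @[d --> +oo] --> (1 : R).
    by rewrite -[X in _ --> X]addr0; apply: cvgD; [exact: cvg_cst | exact: cvgy_invr].
  have := cvgM (cvgB arcsec_sinh_rho_hat (cvg_comp _ _ k1 (continuous_arcsec 1)))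
    (cvgV (oner_neq0 R) k1).
  by rewrite arcsec1 subr0 invr1 mulr1; apply.
apply: (@squeeze_cvge _ _ _ _ (fun d => (L d)%:E) _ (fun=> (pi / 2)%:E)); last 2 first.
- by apply: cvg_EFin; [exact: nearW | exact: L_cvg].
- exact: cvg_cst.
near=> d.
have d1 : 1 < d by near: d; apply: nbhs_pinfty_gt.
have d0 : 0 < d := lt_trans ltr01 d1.
have rho_big : 2 <= sinh (rho_hat d) / d.
  by near: d; have /cvgryPge := @sinh_rho_hat_div_cvgy R; apply.
apply/andP; split; last exact: lambda_le_pi2.
have x_eq : sinh (asinh (d + 1)) / d = 1 + d^-1.
  by rewrite sinh_asinh mulrDl divff ?gt_eqF // div1r.
rewrite /L /h_hat -{1}x_eq.
apply: lambda_ge => //; first by rewrite asinh_lt sinh_asinh ltrDl.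
by rewrite asinh_lt; rewrite ler_pdivlMr // in rho_big; lra.
Unshelve. all: by end_near. Qed.
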